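(* Let $X=X(\Delta)$ be a smooth projective toric variety of dimension $n$ with rays $\rho_1,\dots,\rho_{n+r}$, and suppose there is a maximal cone $\sigma_0$ with $\sigma_0(1)=\{\rho_1,\dots,\rho_n\}$ such that $$\rho_{n+j}+\sum_{i=1}^n\mathfrak{b}_{i,j}\rho_i=0\qquad(1\le j\le r)$$ with all $\mathfrak{b}_{i,j}\in\mathbb{Z}_{\ge0}$; call this positive relation $\mathcal{P}_{n+j}$. Let $D=\sum_{i=1}^{n+r}\mathfrak{a}_iD_{\rho_i}$ with $L=\mathcal{O}_X(D)$ globally generated, and let $\beta$ be the minimal $L$-degree of centred primitive relations. Then for all $1\le i_0\le n$, $1\le j_0\le r$, $$\deg_L(\mathcal{P}_{n+j_0})=\mathfrak{a}_{n+j_0}+\sum_{i=1}^n\mathfrak{a}_i\mathfrak{b}_{i,j_0}\ge\mathfrak{b}_{i_0,j_0}\beta.$$ If $L$ is ample and there exists $i_0\in\{1,\dots,n\}$ such that $\rho_{i_0}$ belongs to no centred primitive collection of $L$-degree $\beta$, then for this $i_0$ and all $1\le j_0\le r$ the inequality is strict: $\mathfrak{a}_{n+j_0}+\sum_{i=1}^n\mathfrak{a}_i\mathfrak{b}_{i,j_0}>\mathfrak{b}_{i_0,j_0}\beta$. Likewise, if $L$ is ample and there exists $j_0\in\{1,\dots,r\}$ such that $\rho_{n+j_0}$ belongs to no centred primitive collection of $L$-degree $\beta$, then for this $j_0$ and all $1\le i_0\le n$ the inequality is strict.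
   Context: Rays are identified with primitive generators; $D_\rho$ is the torus-invariant divisor of $\rho$. For $D=\sum a_\rho D_\rho$, $\phi_D$ is the piecewise linear function equal on each maximal cone $\sigma$ to $\langle m_D(\sigma),\cdot\rangle$ with $\langle m_D(\sigma),\rho\rangle=-a_\rho$ for $\rho\in\sigma(1)$; the $L$-degree of a relation $\sum c_\rho\rho=0$ is $-\sum c_\rho\phi_D(\rho)$. A primitive collection is a set of rays not generating a cone of $\Delta$ while every proper subset does; it is centred if its elements sum to $0$, and $\sum_{\rho\in\mathcal{I}}\rho=0$ is then a centred primitive relation, whose $L$-degree is the $L$-degree of the collection. *)

From HB Require Import structures.
From mathcomp Require Import all_boot all_order all_algebra.
Set Implicit Arguments. Unset Strict Implicit. Unset Printing Implicit Defensive.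
Import Order.TTheory GRing.Theory Num.Theory.
Local Open Scope ring_scope.

Section Toric.
(* N rays in the lattice Z^n; ray i has primitive generator [v i].
   [Sigma] is the set of maximal cones, each given by its set of rays;
   the fan Delta consists of all cones spanned by subsets of maximal cones. *)
Variables (n N : nat) (v : 'I_N -> 'rV[int]_n) (Sigma : {set {set 'I_N}}).

Definition dotz (m x : 'rV[int]_n) : int := \sum_(k < n) m 0 k * x 0 k.

Definition vq (i : 'I_N) : 'rV[rat]_n := map_mx (fun z : int => z%:~R) (v i).

Definition in_cone (S : {set 'I_N}) (x : 'rV[rat]_n) : Prop :=
  exists c : 'I_N -> rat, (forall i, i \in S -> 0 <= c i) /\
                          x = \sum_(i in S) c i *: vq i.

Definition is_cone (S : {set 'I_N}) : bool := [exists s in Sigma, S \subset s].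

Definition smooth_cone (s : {set 'I_N}) : Prop :=
  #|s| = n /\ forall x : 'rV[int]_n, exists c : 'I_N -> int,
                x = \sum_(i in s) c i *: v i.

Definition smooth_complete_fan : Prop :=
  [/\ forall s, s \in Sigma -> smooth_cone s,
      forall s t, s \in Sigma -> t \in Sigma ->
        forall x, in_cone s x -> in_cone t x -> in_cone (s :&: t) x,
      forall x : 'rV[rat]_n, exists2 s, s \in Sigma & in_cone s x &
      forall i : 'I_N, exists2 s, s \in Sigma & i \in s].

(* D = sum_i a i D_i.  m_D(s) is characterized by <m_D(s), v i> = - a i for
   i in s (it exists and is unique in Z^n by smoothness).
   O(D) globally generated  <=>  phi_D convex
                            <=>  <m_D(s), v i> >= - a i for all s, i. *)
Definition globally_generated (a : 'I_N -> int) : Prop :=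
  forall s, s \in Sigma -> exists m : 'rV[int]_n,
    (forall i, i \in s -> dotz m (v i) = - a i) /\
    (forall i, i \notin s -> - a i <= dotz m (v i)).

(* O(D) ample  <=>  phi_D strictly convex *)
Definition ample (a : 'I_N -> int) : Prop :=
  forall s, s \in Sigma -> exists m : 'rV[int]_n,
    (forall i, i \in s -> dotz m (v i) = - a i) /\
    (forall i, i \notin s -> - a i < dotz m (v i)).

Definition projective : Prop := exists a, ample a.

Definition primitive_collection (P : {set 'I_N}) : bool :=
  ~~ is_cone P && [forall Q : {set 'I_N}, (Q \proper P) ==> is_cone Q].

Definition centred (P : {set 'I_N}) : bool := \sum_(i in P) v i == 0.

Definition centred_primitive (P : {set 'I_N}) : bool :=
  primitive_collection P && centred P.

(* value of phi_D at the ray generator v i : on any maximal cone s containing i,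
   phi_D(v i) = <m_D(s), v i> = - a i *)
Definition phiD_ray (a : 'I_N -> int) (i : 'I_N) : int := - a i.

Definition Ldeg_rel (a : 'I_N -> int) (c : 'I_N -> int) : int :=
  - \sum_(i < N) c i * phiD_ray a i.

Definition Ldeg (a : 'I_N -> int) (P : {set 'I_N}) : int :=
  Ldeg_rel a (fun i => (i \in P)%:Z).

End Toric.

(* coefficients of the positive relation P_{n+j}:
   v_{n+j} + sum_{i<n} b i j v_i = 0 *)
Definition posrel_coef (n r : nat) (b : 'I_n -> 'I_r -> nat) (j : 'I_r)
  (k : 'I_(n + r)) : int :=
  match split k with
  | inl i => (b i j)%:Z
  | inr j' => (j' == j)%:Z
  end.

(* Every ray rho_i has a ray relation R_i : v_i + sum_(k in s) d_k v_k = 0 with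
   d >= 0 supported on a maximal cone s not containing rho_i (write -v_i in a
   cone of the complete fan).  Degrees of relations do not change when D is
   replaced by the linearly equivalent D + div(chi^m_s), whose coefficients
   vanish on s and are >= 0 (> 0 off s when L is ample).  Hence a relation c
   with nonnegative coefficients satisfies deg c >= c_i deg R_i, strictly when
   L is ample and c <> c_i R_i.
   For L ample, deg R_i >= beta by descent: the support of R_i is not a cone,
   so it contains a primitive collection P.  If P is centred, R_i is exactly
   the relation of P; otherwise, writing sum_P v = sum_t c v in a cone t,
   R_i - (1_P - c) is a nonnegative relation of smaller degree whose
   coefficient at some ray q is >= 1, so it dominates a ray relation of q.
   The nef case follows by perturbing D to K D + H with H ample and K large.
   Applied to the positive relation P_(n+j), whose coefficients are b_(i,j)
   at rho_i and 1 at rho_(n+j), this gives the proposition. *)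

From HB Require Import structures.
From mathcomp Require Import all_boot all_order all_algebra.
From mathcomp Require Import zify.
Import Order.TTheory GRing.Theory Num.Theory.
Local Open Scope ring_scope.

Set Implicit Arguments. Unset Strict Implicit. Unset Printing Implicit Defensive.

Section SmoothCone.
Variables (n N : nat) (v : 'I_N -> 'rV[int]_n).

Lemma map_mx_intr_sum (S : {set 'I_N}) (c : 'I_N -> int) :
  map_mx (fun z : int => z%:~R) (\sum_(i in S) c i *: v i) =
  \sum_(i in S) (c i)%:~R *: vq v i :> 'rV[rat]_n.
Proof.
apply/rowP => l; rewrite !mxE !summxE.
rewrite (big_morph (fun z : int => (z%:~R : rat)) (@intrD _) (mulr0z 1)).
by apply: eq_bigr => i _; rewrite !mxE intrM.
Qed.

Lemma smooth_cone_free (s : {set 'I_N}) (c : 'I_N -> rat) :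
  smooth_cone v s -> \sum_(i in s) c i *: vq v i = 0 -> forall i, i \in s -> c i = 0.
Proof.
move=> [card_s span] c_rel i si.
pose M : 'M[rat]_(#|s|, n) := \matrix_(j, l) vq v (enum_val j) 0 l.
have rowM j : row j M = vq v (enum_val j) by apply/rowP => l; rewrite !mxE.
have sum_rowsM (d : 'I_N -> rat) :
    \row_j d (enum_val j) *m M = \sum_(i in s) d i *: vq v i.
  rewrite mulmx_sum_row (big_enum_val (fun i => d i *: vq v i)) /=.
  by apply: eq_bigr => j _; rewrite rowM mxE.
have M_full : (1%:M <= M)%MS.
  apply/row_subP => l; apply/submxP; have [d Hd] := span (row l 1%:M).
  exists (\row_j (d (enum_val j))%:~R).
  rewrite (sum_rowsM (fun i => (d i)%:~R)) -map_mx_intr_sum -Hd.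
  by apply/rowP => k; rewrite !mxE; case: (l == k).
have M_free : row_free M.
  by rewrite /row_free eqn_leq rank_leq_row /= [X in (X <= _)%N]card_s
    -{1}(mxrank1 rat n) mxrankS.
have /rowP/(_ (enum_rank_in si i)) := row_free_inj M_free
  (etrans (sum_rowsM c) (esym (etrans (mul0mx _ M) (esym c_rel)))).
by rewrite !mxE enum_rankK_in.
Qed.

End SmoothCone.

Section Fan.
Variables (n N : nat) (v : 'I_N -> 'rV[int]_n) (Sigma : {set {set 'I_N}}).
Hypothesis fanP : smooth_complete_fan v Sigma.

Definition is_relation (c : 'I_N -> int) := \sum_(k < N) c k *: v k = 0.

Lemma is_relationB (c1 c2 : 'I_N -> int) :
  is_relation c1 -> is_relation c2 -> is_relation (fun k => c1 k - c2 k).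
Proof.
rewrite /is_relation => c1_rel c2_rel.
by under eq_bigr => k _ do rewrite scalerBl; rewrite sumrB c1_rel c2_rel subrr.
Qed.

Lemma is_relationZ (z : int) (c : 'I_N -> int) :
  is_relation c -> is_relation (fun k => z * c k).
Proof.
rewrite /is_relation => c_rel.
by under eq_bigr => k _ do rewrite -scalerA; rewrite -scaler_sumr c_rel scaler0.
Qed.

Lemma sum_indicator_scale (P : {set 'I_N}) :
  \sum_(k < N) (k \in P)%:Z *: v k = \sum_(k in P) v k.
Proof.
rewrite [RHS]big_mkcond /=; apply: eq_bigr => k _.
by case: (k \in P); rewrite ?scale1r ?scale0r.
Qed.

Lemma centred_is_relation (P : {set 'I_N}) :
  centred v P -> is_relation (fun k => (k \in P)%:Z).
Proof. by rewrite /is_relation sum_indicator_scale => /eqP. Qed.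

Lemma sum_scale_on (s : {set 'I_N}) (c : 'I_N -> int) :
  (forall k, k \notin s -> c k = 0) ->
  \sum_(k < N) c k *: v k = \sum_(k in s) c k *: v k.
Proof.
move=> c_s; rewrite [RHS]big_mkcond /=; apply: eq_bigr => k _.
by case: ifP => // /negbT /c_s ->; rewrite scale0r.
Qed.

Lemma relation_on_cone_eq0 (s : {set 'I_N}) (c : 'I_N -> int) :
  s \in Sigma -> is_relation c -> (forall k, k \notin s -> c k = 0) ->
  forall k, c k = 0.
Proof.
move=> sS c_rel c_s k; have [|/negPn ks] := boolP (k \notin s); first exact: c_s.
have [smoothS _ _ _] := fanP.
apply/eqP; rewrite -(intr_eq0 rat); apply/eqP.
apply: (smooth_cone_free (c := fun k => (c k)%:~R) (smoothS s sS) _ ks).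
by rewrite -map_mx_intr_sum -(sum_scale_on c_s) c_rel; apply/rowP => l; rewrite !mxE.
Qed.

Lemma relation_off_cone (s : {set 'I_N}) (c : 'I_N -> int) (k : 'I_N) :
  s \in Sigma -> is_relation c -> c k != 0 -> exists2 k', k' \notin s & c k' != 0.
Proof.
move=> sS c_rel ck.
have [k' /andP[k's ck'] | c_s] := pickP (fun k' => (k' \notin s) && (c k' != 0)).
  by exists k'.
move: ck; rewrite (relation_on_cone_eq0 sS c_rel) ?eqxx // => k' k's.
by apply/eqP; have := c_s k'; rewrite k's => /negbFE.
Qed.

Lemma nonneg_int_coords (x : 'rV[int]_n) : exists s c,
  [/\ s \in Sigma, forall k, 0 <= c k, forall k, k \notin s -> c k = 0
    & x = \sum_(k < N) c k *: v k].
Proof.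
have [smoothS _ complete _] := fanP.
have [s sS [cq [cq_ge0 x_cq]]] := complete (map_mx (fun z : int => z%:~R) x).
have [_ span] := smoothS s sS; have [c x_c] := span x.
have c_cq k : k \in s -> (c k)%:~R = cq k.
  move=> ks; apply/eqP; rewrite -subr_eq0; apply/eqP.
  apply: (smooth_cone_free (c := fun k => (c k)%:~R - cq k) (smoothS s sS)) => //.
  under eq_bigr => i _ do rewrite scalerBl.
  by rewrite sumrB -map_mx_intr_sum -x_c x_cq subrr.
exists s, (fun k => if k \in s then c k else 0); split => //.
- by move=> k; case: ifP => // ks; rewrite -(ler0z rat) c_cq // cq_ge0.
- by move=> k /negbTE ->.
- rewrite (@sum_scale_on s) => [|k /negbTE -> //].
  by rewrite x_c; apply: eq_bigr => k ->.
Qed.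

Definition ray_relation (i : 'I_N) (s : {set 'I_N}) (R : 'I_N -> int) :=
  [/\ s \in Sigma, i \notin s, is_relation R, forall k, 0 <= R k
    & forall k, k \notin s -> R k = (k == i)%:Z].

Lemma ray_relation_at_ray (i : 'I_N) s R : ray_relation i s R -> R i = 1.
Proof. by case=> _ i_s _ _ R_s; rewrite R_s ?eqxx. Qed.

Lemma exists_ray_relation (i : 'I_N) : exists s R, ray_relation i s R.
Proof.
have [s [d [sS d_ge0 d_s vi_d]]] := nonneg_int_coords (- v i).
pose R k := (k == i)%:Z + d k.
have R_rel : is_relation R.
  rewrite /is_relation; under eq_bigr => k _ do rewrite scalerDl.
  rewrite big_split /= -vi_d (bigD1 i) //= eqxx scale1r big1 ?addr0 ?subrr //.
  by move=> k /negbTE ->; rewrite scale0r.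
have R_s k : k \notin s -> R k = (k == i)%:Z by rewrite /R => /d_s ->; rewrite addr0.
have i_s : i \notin s.
  apply/negP => i_s.
  have R_s0 k : k \notin s -> R k = 0.
    by move=> ks; rewrite R_s //; case: eqP => // ki; move: ks; rewrite ki i_s.
  have := relation_on_cone_eq0 sS R_rel R_s0 i.
  by rewrite /R eqxx /=; have := d_ge0 i; lia.
exists s, R; split=> // k; exact: addr_ge0.
Qed.

(** [shiftD a m] is the coefficient vector of the linearly equivalent divisor
    [D + div(chi^m)]. *)
Definition shiftD (a : 'I_N -> int) (m : 'rV[int]_n) (k : 'I_N) : int :=
  a k + dotz m (v k).

Lemma Ldeg_relE (a c : 'I_N -> int) : Ldeg_rel a c = \sum_(k < N) c k * a k.
Proof.
rewrite /Ldeg_rel /phiD_ray -sumrN; apply: eq_bigr => k _.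
by rewrite mulrN opprK.
Qed.

Lemma eq_Ldeg_rel (a c1 c2 : 'I_N -> int) : c1 =1 c2 -> Ldeg_rel a c1 = Ldeg_rel a c2.
Proof. by move=> c12; rewrite !Ldeg_relE; apply: eq_bigr => k _; rewrite c12. Qed.

Lemma Ldeg_relB (a c1 c2 : 'I_N -> int) :
  Ldeg_rel a (fun k => c1 k - c2 k) = Ldeg_rel a c1 - Ldeg_rel a c2.
Proof.
by rewrite !Ldeg_relE -sumrB; apply: eq_bigr => k _; rewrite mulrBl.
Qed.

Lemma Ldeg_relZ (a c : 'I_N -> int) (z : int) :
  Ldeg_rel a (fun k => z * c k) = z * Ldeg_rel a c.
Proof.
by rewrite !Ldeg_relE mulr_sumr; apply: eq_bigr => k _; rewrite mulrA.
Qed.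

Lemma Ldeg_rel_scaleD (K : int) (a h c : 'I_N -> int) :
  Ldeg_rel (fun k => K * a k + h k) c = K * Ldeg_rel a c + Ldeg_rel h c.
Proof.
rewrite !Ldeg_relE mulr_sumr -big_split; apply: eq_bigr => k _.
by rewrite mulrDr mulrCA.
Qed.

Lemma dotz_sum (m : 'rV[int]_n) (c : 'I_N -> int) :
  dotz m (\sum_(k < N) c k *: v k) = \sum_(k < N) c k * dotz m (v k).
Proof.
rewrite /dotz; under eq_bigr => l _ do rewrite summxE big_distrr /=.
rewrite exchange_big /=; apply: eq_bigr => k _.
by rewrite big_distrr /=; apply: eq_bigr => l _; rewrite mxE mulrCA.
Qed.

Lemma dotzDl (z : int) (m1 m2 x : 'rV[int]_n) :
  dotz (z *: m1 + m2) x = z * dotz m1 x + dotz m2 x.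
Proof.
rewrite /dotz big_distrr -big_split /=; apply: eq_bigr => l _.
by rewrite !mxE mulrDl mulrA.
Qed.

Lemma Ldeg_rel_shiftD (a c : 'I_N -> int) (m : 'rV[int]_n) :
  is_relation c -> Ldeg_rel (shiftD a m) c = Ldeg_rel a c.
Proof.
move=> c_rel; rewrite !Ldeg_relE /shiftD.
under eq_bigr => k _ do rewrite mulrDr.
rewrite big_split /= -dotz_sum c_rel [dotz m 0]big1 ?addr0 // => l _.
by rewrite mxE mulr0.
Qed.

Lemma globally_generated_shiftD (a : 'I_N -> int) (s : {set 'I_N}) :
  globally_generated v Sigma a -> s \in Sigma -> exists m,
    (forall k, k \in s -> shiftD a m k = 0) /\ (forall k, 0 <= shiftD a m k).
Proof.
move=> gg_a sS; have [m [m_s m_ge]] := gg_a s sS.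
exists m; split=> [k ks | k]; first by rewrite /shiftD m_s // subrr.
rewrite /shiftD -lerBlDl sub0r.
by have [ks|ks] := boolP (k \in s); [rewrite m_s | rewrite m_ge].
Qed.

Lemma ample_shiftD (a : 'I_N -> int) (s : {set 'I_N}) :
  ample v Sigma a -> s \in Sigma -> exists m,
    (forall k, k \in s -> shiftD a m k = 0) /\
    (forall k, k \notin s -> 0 < shiftD a m k).
Proof.
move=> ample_a sS; have [m [m_s m_gt]] := ample_a s sS.
exists m; split=> [k ks | k ks]; first by rewrite /shiftD m_s // subrr.
by rewrite /shiftD -ltrBlDl sub0r m_gt.
Qed.

Lemma ample_globally_generated (a : 'I_N -> int) :
  ample v Sigma a -> globally_generated v Sigma a.
Proof.
move=> ample_a s sS; have [m [m_s m_gt]] := ample_a s sS.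
by exists m; split=> // k /m_gt /ltW.
Qed.

Lemma Ldeg_rel_ge0_off_cone (a c : 'I_N -> int) (s : {set 'I_N}) :
  globally_generated v Sigma a -> s \in Sigma -> is_relation c ->
  (forall k, k \notin s -> 0 <= c k) -> 0 <= Ldeg_rel a c.
Proof.
move=> gg_a sS c_rel c_ge0; have [m [m_s m_ge0]] := globally_generated_shiftD gg_a sS.
rewrite -(Ldeg_rel_shiftD a m c_rel) Ldeg_relE sumr_ge0 // => k _.
have [ks|ks] := boolP (k \in s); first by rewrite m_s ?mulr0.
by rewrite mulr_ge0 ?c_ge0 ?m_ge0.
Qed.

Lemma Ldeg_rel_gt0_off_cone (a c : 'I_N -> int) (s : {set 'I_N}) (k0 : 'I_N) :
  ample v Sigma a -> s \in Sigma -> is_relation c ->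
  (forall k, k \notin s -> 0 <= c k) -> c k0 != 0 -> 0 < Ldeg_rel a c.
Proof.
move=> ample_a sS c_rel c_ge0 ck0.
have [k ks ck] := relation_off_cone sS c_rel ck0.
have [m [m_s m_gt0]] := ample_shiftD ample_a sS.
have term_ge0 k' : 0 <= c k' * shiftD a m k'.
  have [k's|k's] := boolP (k' \in s); first by rewrite m_s ?mulr0.
  by rewrite mulr_ge0 ?c_ge0 ?ltW ?m_gt0.
rewrite -(Ldeg_rel_shiftD a m c_rel) Ldeg_relE (bigD1 k) //=.
apply: (@lt_le_trans _ _ (c k * shiftD a m k)); last by rewrite lerDl sumr_ge0.
by rewrite mulr_gt0 ?m_gt0 // lt_def ck c_ge0.
Qed.

Lemma Ldeg_rel_ge0 (a c : 'I_N -> int) :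
  globally_generated v Sigma a -> is_relation c -> (forall k, 0 <= c k) ->
  0 <= Ldeg_rel a c.
Proof.
have [_ _ complete _] := fanP; have [s sS _] := complete 0.
by move=> gg_a c_rel c_ge0; apply: (Ldeg_rel_ge0_off_cone gg_a sS).
Qed.

Lemma ray_remainder_ge0 (i : 'I_N) s R (c : 'I_N -> int) :
  ray_relation i s R -> (forall k, 0 <= c k) ->
  forall k, k \notin s -> 0 <= c k - c i * R k.
Proof.
move=> [_ _ _ _ R_s] c_ge0 k ks; rewrite R_s //.
by case: eqP => [->|_]; rewrite ?mulr1 ?subrr // mulr0 subr0.
Qed.

Lemma Ldeg_rel_ge_ray (a c : 'I_N -> int) (i : 'I_N) s R :
  globally_generated v Sigma a -> ray_relation i s R -> is_relation c ->
  (forall k, 0 <= c k) -> c i * Ldeg_rel a R <= Ldeg_rel a c.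
Proof.
move=> gg_a Ri c_rel c_ge0; have [sS _ R_rel _ _] := Ri.
rewrite -subr_ge0 -Ldeg_relZ -Ldeg_relB.
apply: (Ldeg_rel_ge0_off_cone gg_a sS); first exact/is_relationB/is_relationZ.
exact: ray_remainder_ge0.
Qed.

Lemma Ldeg_rel_gt_ray (a c : 'I_N -> int) (i j : 'I_N) s R :
  ample v Sigma a -> ray_relation i s R -> is_relation c ->
  (forall k, 0 <= c k) -> c j != c i * R j -> c i * Ldeg_rel a R < Ldeg_rel a c.
Proof.
move=> ample_a Ri c_rel c_ge0 cj; have [sS _ R_rel _ _] := Ri.
rewrite -subr_gt0 -Ldeg_relZ -Ldeg_relB.
apply: (Ldeg_rel_gt0_off_cone (k0 := j) ample_a sS).
- exact/is_relationB/is_relationZ.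
- exact: ray_remainder_ge0.
- by rewrite subr_eq0.
Qed.

Lemma exists_primitive_subset (C : {set 'I_N}) :
  ~~ is_cone Sigma C -> exists2 P, primitive_collection Sigma P & P \subset C.
Proof.
move=> C_nc.
case: (@arg_minnP _ C (fun Q => (Q \subset C) && ~~ is_cone Sigma Q) (fun Q => #|Q|)).
  by rewrite subxx C_nc.
move=> P /andP[PC P_nc] P_min; exists P => //.
rewrite /primitive_collection P_nc; apply/forallP => Q; apply/implyP => QP.
apply: contraT => Q_nc; have := P_min Q.
by rewrite (subset_trans (proper_sub QP) PC) Q_nc leqNgt (proper_card QP) => /(_ isT).
Qed.

Lemma ray_relation_support (i k : 'I_N) s R :
  ray_relation i s R -> R k != 0 -> k \notin s -> k = i.
Proof.
move=> [_ _ _ _ R_s] Rk /R_s Rk_i; apply/eqP; apply: contraNT Rk => ki.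
by rewrite Rk_i (negbTE ki).
Qed.

Lemma ray_support_not_cone (i : 'I_N) s R :
  ray_relation i s R -> ~~ is_cone Sigma [set k | R k != 0].
Proof.
move=> Ri; have [_ _ R_rel _ _] := Ri.
apply/negP => /existsP[t /andP[tS supp_t]].
suff R_t k : k \notin t -> R k = 0.
  by move/eqP: (relation_on_cone_eq0 tS R_rel R_t i); rewrite (ray_relation_at_ray Ri).
by move=> kt; apply/eqP; apply: contraNT kt => Rk; apply: (subsetP supp_t); rewrite inE.
Qed.

Lemma ray_mem_support_not_cone (i : 'I_N) s R (P : {set 'I_N}) :
  ray_relation i s R -> P \subset [set k | R k != 0] -> ~~ is_cone Sigma P ->
  i \in P.
Proof.
move=> Ri P_supp; have [sS _ _ _ _] := Ri; apply: contraR => iP.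
apply/existsP; exists s; rewrite sS; apply/subsetP => k kP; apply: contraR iP => ks.
have Rk : R k != 0 by have := subsetP P_supp k kP; rewrite inE.
by rewrite -(ray_relation_support Ri Rk ks).
Qed.

Lemma ray_relation_centred (i : 'I_N) s R (P : {set 'I_N}) :
  ray_relation i s R -> P \subset [set k | R k != 0] -> ~~ is_cone Sigma P ->
  centred v P -> R =1 (fun k => (k \in P)%:Z).
Proof.
move=> Ri P_supp P_nc P_cen; have [sS _ R_rel _ R_s] := Ri.
have iP := ray_mem_support_not_cone Ri P_supp P_nc.
have R_P := relation_on_cone_eq0 sS (is_relationB R_rel (centred_is_relation P_cen)).
move=> k; apply/eqP; rewrite -subr_eq0; apply/eqP; apply: R_P => {}k ks.
have [->|ki] := eqVneq k i; first by rewrite (ray_relation_at_ray Ri) iP subrr.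
have kP : k \notin P.
  apply: contra ki => kP; apply/eqP/(ray_relation_support Ri _ ks).
  by have := subsetP P_supp k kP; rewrite inE.
by rewrite R_s // (negbTE ki) (negbTE kP) subrr.
Qed.

Lemma noncone_positive_relation (a : 'I_N -> int) (P : {set 'I_N}) :
  ample v Sigma a -> ~~ is_cone Sigma P -> ~~ centred v P -> exists c q,
  [/\ forall k, 0 <= c k, c q != 0, is_relation (fun k => (k \in P)%:Z - c k)
    & 0 < Ldeg_rel a (fun k => (k \in P)%:Z - c k)].
Proof.
move=> ample_a P_nc P_ncen.
have [t [c [tS c_ge0 c_t sum_P]]] := nonneg_int_coords (\sum_(k in P) v k).
have Q_rel : is_relation (fun k => (k \in P)%:Z - c k).
  rewrite /is_relation; under eq_bigr => k _ do rewrite scalerBl.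
  by rewrite sumrB sum_indicator_scale sum_P subrr.
have [q cq] : exists q, c q != 0.
  have [q cq|c0] := pickP (fun q => c q != 0); first by exists q.
  move: P_ncen; rewrite /centred sum_P big1 ?eqxx // => k _.
  by move/negbFE/eqP: (c0 k) => ->; rewrite scale0r.
have [p pP pt] : exists2 p, p \in P & p \notin t.
  have [p /andP[pP pt] | P_t] := pickP (fun p => (p \in P) && (p \notin t)).
    by exists p.
  case/negP: P_nc; apply/existsP; exists t; rewrite tS; apply/subsetP => k kP.
  by have := P_t k; rewrite kP /= => /negbFE.
exists c, q; split=> //.
apply: (Ldeg_rel_gt0_off_cone (k0 := p) ample_a tS Q_rel).
  by move=> k kt; rewrite c_t // subr0.
by rewrite c_t // pP subr0.
Qed.

Lemma ray_relation_descent (a : 'I_N -> int) (i : 'I_N) s R (P : {set 'I_N}) :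
  ample v Sigma a -> ray_relation i s R -> P \subset [set k | R k != 0] ->
  ~~ is_cone Sigma P -> ~~ centred v P ->
  exists q s' R', ray_relation q s' R' /\ Ldeg_rel a R' < Ldeg_rel a R.
Proof.
move=> ample_a Ri P_supp P_nc P_ncen; have [_ _ R_rel R_ge0 _] := Ri.
have gg_a := ample_globally_generated ample_a.
have [c [q [c_ge0 cq Q_rel Q_gt0]]] := noncone_positive_relation ample_a P_nc P_ncen.
pose E k := R k - ((k \in P)%:Z - c k).
have P_R k : (k \in P)%:Z <= R k.
  have := R_ge0 k; have := subsetP P_supp k; rewrite inE.
  by case: (k \in P) => /=; lia.
have E_ge0 k : 0 <= E k by have := P_R k; have := c_ge0 k; rewrite /E; lia.
have E_q : 1 <= E q by have := P_R q; move: cq (c_ge0 q); rewrite /E; lia.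
have [s' [R' R'q]] := exists_ray_relation q; have [_ _ R'_rel R'_ge0 _] := R'q.
exists q, s', R'; split => //.
have R'_E : E q * Ldeg_rel a R' <= Ldeg_rel a E.
  exact: Ldeg_rel_ge_ray gg_a R'q (is_relationB R_rel Q_rel) E_ge0.
have := ler_peMl (Ldeg_rel_ge0 gg_a R'_rel R'_ge0) E_q.
have : Ldeg_rel a R = Ldeg_rel a E + Ldeg_rel a (fun k => (k \in P)%:Z - c k).
  by rewrite Ldeg_relB subrK.
lia.
Qed.

Lemma ray_relation_step (a : 'I_N -> int) (i : 'I_N) s R :
  ample v Sigma a -> ray_relation i s R ->
  (exists2 P, centred_primitive v Sigma P & R =1 (fun k => (k \in P)%:Z)) \/
  exists q s' R', ray_relation q s' R' /\ Ldeg_rel a R' < Ldeg_rel a R.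
Proof.
move=> ample_a Ri.
have [P P_prim P_supp] := exists_primitive_subset (ray_support_not_cone Ri).
have P_nc : ~~ is_cone Sigma P by case/andP: P_prim.
have [P_cen|P_ncen] := boolP (centred v P); [left | right].
  by exists P; [apply/andP | exact: ray_relation_centred Ri P_supp P_nc P_cen].
exact: ray_relation_descent ample_a Ri P_supp P_nc P_ncen.
Qed.

Lemma ray_relation_Ldeg_ge_ample (a : 'I_N -> int) (beta : int) (i : 'I_N) s R :
  ample v Sigma a -> (forall P, centred_primitive v Sigma P -> beta <= Ldeg a P) ->
  ray_relation i s R -> beta <= Ldeg_rel a R.
Proof.
move=> ample_a beta_le Ri; have gg_a := ample_globally_generated ample_a.
suff bound (K : nat) i' s' R' :
    ray_relation i' s' R' -> Ldeg_rel a R' <= K%:Z -> beta <= Ldeg_rel a R'.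
  have [_ _ R_rel R_ge0 _] := Ri; have := Ldeg_rel_ge0 gg_a R_rel R_ge0.
  by move=> R_ge0'; apply: (bound `|Ldeg_rel a R|%N _ _ _ Ri); lia.
elim: K i' s' R' => [|K IH] i' s' R' R'i deg_R'.
all: have [[P P_cp R'_P]|[q [t [Q [Qq Q_lt]]]]] := ray_relation_step ample_a R'i.
all: try by rewrite (eq_Ldeg_rel a R'_P) beta_le.
  by have [_ _ Q_rel Q_ge0 _] := Qq; have := Ldeg_rel_ge0 gg_a Q_rel Q_ge0; lia.
by have := IH q t Q Qq ltac:(lia); lia.
Qed.

Lemma ray_relation_Ldeg_cases (a : 'I_N -> int) (beta : int) (i : 'I_N) s R :
  ample v Sigma a -> (forall P, centred_primitive v Sigma P -> beta <= Ldeg a P) ->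
  ray_relation i s R ->
  beta < Ldeg_rel a R \/ exists P,
    [/\ centred_primitive v Sigma P, Ldeg a P = beta & R =1 (fun k => (k \in P)%:Z)].
Proof.
move=> ample_a beta_le Ri.
have := ray_relation_Ldeg_ge_ample ample_a beta_le Ri.
rewrite le_eqVlt => /orP[/eqP beta_R|]; [right | by left].
have [[P P_cp R_P]|[q [t [Q [Qq Q_lt]]]]] := ray_relation_step ample_a Ri.
  by exists P; split=> //; rewrite beta_R (eq_Ldeg_rel a R_P).
by have Q_ge := ray_relation_Ldeg_ge_ample ample_a beta_le Qq; exfalso; lia.
Qed.

Lemma ample_scaleD (a h : 'I_N -> int) (K : int) :
  globally_generated v Sigma a -> ample v Sigma h -> 0 <= K ->
  ample v Sigma (fun k => K * a k + h k).
Proof.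
move=> gg_a ample_h K_ge0 t tS.
have [m1 [m1_t m1_ge]] := gg_a t tS; have [m2 [m2_t m2_gt]] := ample_h t tS.
exists (K *: m1 + m2); split=> k kt; rewrite dotzDl.
  by rewrite m1_t // m2_t // mulrN opprD.
by rewrite opprD -mulrN ler_ltD ?m2_gt // ler_wpM2l ?m1_ge.
Qed.

(** Perturbing [a] to the ample [K a + h], with [K] larger than the [h]-degree
    of [R], reduces the nef case to the ample one. *)
Lemma ray_relation_Ldeg_ge (a : 'I_N -> int) (beta : int) (i : 'I_N) s R :
  projective v Sigma -> globally_generated v Sigma a ->
  (forall P, centred_primitive v Sigma P -> beta <= Ldeg a P) ->
  ray_relation i s R -> beta <= Ldeg_rel a R.
Proof.
move=> [h ample_h] gg_a beta_le Ri.
pose K : int := (`|Ldeg_rel h R|%N.+1)%:Z.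
have Kbeta_le P : centred_primitive v Sigma P ->
    K * beta <= Ldeg (fun k => K * a k + h k) P.
  move=> P_cp; have /andP[_ P_cen] := P_cp; rewrite /Ldeg Ldeg_rel_scaleD.
  rewrite ler_wpDr ?ler_wpM2l ?beta_le //.
  exact: Ldeg_rel_ge0 (ample_globally_generated ample_h) (centred_is_relation P_cen) _.
have ample_Ka_h := ample_scaleD gg_a ample_h (isT : 0 <= K).
have := ray_relation_Ldeg_ge_ample ample_Ka_h Kbeta_le Ri.
rewrite Ldeg_rel_scaleD; apply: contraLR; rewrite -!ltNge => R_lt.
have : K * (Ldeg_rel a R + 1) <= K * beta by rewrite ler_wpM2l //; lia.
by rewrite /K; lia.
Qed.

Lemma Ldeg_rel_ge_lower_bound (a c : 'I_N -> int) (beta : int) (i : 'I_N) :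
  projective v Sigma -> globally_generated v Sigma a ->
  (forall P, centred_primitive v Sigma P -> beta <= Ldeg a P) ->
  is_relation c -> (forall k, 0 <= c k) -> c i * beta <= Ldeg_rel a c.
Proof.
move=> proj gg_a beta_le c_rel c_ge0; have [s [R Ri]] := exists_ray_relation i.
apply: le_trans (Ldeg_rel_ge_ray gg_a Ri c_rel c_ge0).
by rewrite ler_wpM2l // (ray_relation_Ldeg_ge proj gg_a beta_le Ri).
Qed.

Lemma Ldeg_rel_gt_lower_bound (a c : 'I_N -> int) (beta : int) (i j : 'I_N) :
  ample v Sigma a -> (forall P, centred_primitive v Sigma P -> beta <= Ldeg a P) ->
  is_relation c -> (forall k, 0 <= c k) -> c j != 0 ->
  (forall P, centred_primitive v Sigma P -> Ldeg a P = beta -> i \in P -> j \notin P) ->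
  c i * beta < Ldeg_rel a c.
Proof.
move=> ample_a beta_le c_rel c_ge0 cj ij_min.
have gg_a := ample_globally_generated ample_a; have [s [R Ri]] := exists_ray_relation i.
have c_gt_R := Ldeg_rel_gt_ray (j := j) ample_a Ri c_rel c_ge0.
have [beta_lt|[P [P_cp P_beta R_P]]] := ray_relation_Ldeg_cases ample_a beta_le Ri.
  have [ci0|ci] := eqVneq (c i) 0.
    by move: c_gt_R; rewrite ci0 !mul0r; apply.
  apply: lt_le_trans (Ldeg_rel_ge_ray gg_a Ri c_rel c_ge0).
  by rewrite ltr_pM2l // lt_def ci c_ge0.
have iP : i \in P by move: (R_P i); rewrite (ray_relation_at_ray Ri); case: (i \in P).
apply: le_lt_trans (c_gt_R _); first by rewrite (eq_Ldeg_rel a R_P) -/(Ldeg a P) P_beta.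
by rewrite R_P (negbTE (ij_min P P_cp P_beta iP)) mulr0.
Qed.

End Fan.

Section PositiveRelation.
Variables (n r : nat) (b : 'I_n -> 'I_r -> nat) (j0 : 'I_r).

Lemma posrel_coef_lshift (i : 'I_n) : posrel_coef b j0 (lshift r i) = (b i j0)%:Z.
Proof. by rewrite /posrel_coef (unsplitK (inl i)). Qed.

Lemma posrel_coef_rshift (j : 'I_r) : posrel_coef b j0 (rshift n j) = (j == j0)%:Z.
Proof. by rewrite /posrel_coef (unsplitK (inr j)). Qed.

Lemma posrel_coef_ge0 (k : 'I_(n + r)) : 0 <= posrel_coef b j0 k.
Proof. by rewrite /posrel_coef; case: split. Qed.

Lemma sum_posrel_coef (V : nmodType) (F : 'I_(n + r) -> int -> V) :
  (forall k, F k 0 = 0) ->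
  \sum_(k < n + r) F k (posrel_coef b j0 k) =
  F (rshift n j0) 1 + \sum_(i < n) F (lshift r i) (b i j0)%:Z.
Proof.
move=> F0; rewrite big_split_ord [RHS]addrC /=; congr (_ + _).
  by apply: eq_bigr => i _; rewrite posrel_coef_lshift.
rewrite (bigD1 j0) //= posrel_coef_rshift eqxx big1 ?addr0 // => j /negbTE j_j0.
by rewrite posrel_coef_rshift j_j0 F0.
Qed.

Lemma posrel_is_relation (v : 'I_(n + r) -> 'rV[int]_n) :
  v (rshift n j0) + \sum_(i < n) (b i j0)%:Z *: v (lshift r i) = 0 ->
  is_relation v (posrel_coef b j0).
Proof.
move=> posP; rewrite /is_relation (sum_posrel_coef (F := fun k z => z *: v k)).
  by rewrite scale1r.
by move=> k; rewrite scale0r.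
Qed.

Lemma Ldeg_rel_posrel (a : 'I_(n + r) -> int) :
  Ldeg_rel a (posrel_coef b j0) =
  a (rshift n j0) + \sum_(i < n) a (lshift r i) * (b i j0)%:Z.
Proof.
rewrite Ldeg_relE (sum_posrel_coef (F := fun k z => z * a k)) => [|k]; last exact: mul0r.
by rewrite mul1r; congr (_ + _); apply: eq_bigr => i _; rewrite mulrC.
Qed.

End PositiveRelation.

Unset Implicit Arguments.

Theorem proposition6p6 (n r : nat) (v : 'I_(n + r) -> 'rV[int]_n)
  (Sigma : {set {set 'I_(n + r)}}) (b : 'I_n -> 'I_r -> nat)
  (a : 'I_(n + r) -> int) (beta : int) :
  smooth_complete_fan v Sigma ->
  projective v Sigma ->
  (* sigma_0 with rays rho_1, ..., rho_n *)
  [set i : 'I_(n + r) | (i < n)%N] \in Sigma ->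
  (* positive relations P_{n+j} *)
  (forall j : 'I_r,
     v (rshift n j) + \sum_(i < n) (b i j)%:Z *: v (lshift r i) = 0) ->
  globally_generated v Sigma a ->
  (* beta = minimal L-degree of centred primitive relations *)
  (exists P, centred_primitive v Sigma P /\ Ldeg a P = beta) ->
  (forall P, centred_primitive v Sigma P -> beta <= Ldeg a P) ->
  [/\ forall (i0 : 'I_n) (j0 : 'I_r),
        Ldeg_rel a (posrel_coef b j0)
          = a (rshift n j0) + \sum_(i < n) a (lshift r i) * (b i j0)%:Z /\
        (b i0 j0)%:Z * beta
          <= a (rshift n j0) + \sum_(i < n) a (lshift r i) * (b i j0)%:Z,
      ample v Sigma a -> forall i0 : 'I_n,
        (forall P, centred_primitive v Sigma P -> Ldeg a P = beta ->
                   lshift r i0 \notin P) ->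
        forall j0 : 'I_r,
          (b i0 j0)%:Z * beta
            < a (rshift n j0) + \sum_(i < n) a (lshift r i) * (b i j0)%:Z
    & ample v Sigma a -> forall j0 : 'I_r,
        (forall P, centred_primitive v Sigma P -> Ldeg a P = beta ->
                   rshift n j0 \notin P) ->
        forall i0 : 'I_n,
          (b i0 j0)%:Z * beta
            < a (rshift n j0) + \sum_(i < n) a (lshift r i) * (b i j0)%:Z].
Proof.
move=> fanP proj _ posP gg_a _ beta_le.
have c_rel j0 := posrel_is_relation (posP j0).
have c_ge0 j0 := @posrel_coef_ge0 n r b j0.
have c_rshift j0 : posrel_coef b j0 (rshift n j0) != 0.
  by rewrite posrel_coef_rshift eqxx.
split=> [i0 j0 | ample_a i0 i0_min j0 | ample_a j0 j0_min i0];
  rewrite -Ldeg_rel_posrel -posrel_coef_lshift.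
- split=> //; apply: (Ldeg_rel_ge_lower_bound (c := posrel_coef b j0) fanP _ proj)
    gg_a beta_le (c_rel j0) (c_ge0 j0).
- apply: (Ldeg_rel_gt_lower_bound (c := posrel_coef b j0) fanP ample_a beta_le)
    (c_rel j0) (c_ge0 j0) (c_rshift j0) _ => P P_cp P_beta i0P.
  by have := i0_min P P_cp P_beta; rewrite i0P.
- apply: (Ldeg_rel_gt_lower_bound (c := posrel_coef b j0) fanP ample_a beta_le)
    (c_rel j0) (c_ge0 j0) (c_rshift j0) _ => P P_cp P_beta _.
  exact: j0_min.
Qed.
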